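(* Let $G=G_1\times G_2$ be a direct product of finite groups, let $A$ be a finite group on which $G_1$ acts from the right by automorphisms, and let $I=\mathrm{Ind}_{G_1}^G(A)$, where $G_1$ is identified with $G_1\times\{1\}\leq G$. Assume $|G_2|\geq|A|$. Then there exists $\zeta\in I$ such that for every $g_1\in G_1$, the normal subgroup $N$ of $A\wr_{G_1}G$ generated by $\tau=(\zeta,(g_1,1))$ satisfies $\pi(N\cap I)=A$.
   Context: For finite groups $G_1\leq G$ and a finite group $A$ with a right action of $G_1$, $\mathrm{Ind}_{G_1}^G(A)=\{f:G\to A \mid f(\sigma\tau)=f(\sigma)^\tau\ \forall\sigma\in G,\ \forall\tau\in G_1\}$, a group under pointwise multiplication. $G$ acts on it from the right by $f^\sigma(\tau)=f(\sigma\tau)$. The twisted wreath product is the semidirect product $A\wr_{G_1}G=\mathrm{Ind}_{G_1}^G(A)\rtimes G$. The map $\pi:\mathrm{Ind}_{G_1}^G(A)\to A$ is $\pi(f)=f(1)$. *)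

From HB Require Import structures.
From mathcomp Require Import all_boot all_fingroup.
Set Implicit Arguments.
Unset Strict Implicit.
Unset Printing Implicit Defensive.
Import GroupScope.
Local Open Scope group_scope.

Section TwistedWreath.
Variables gT1 gT2 aT : finGroupType.

Notation GT := (gT1 * gT2)%type.

Definition FunG : finGroupType := {dffun forall _ : GT, aT}.

Definition shift (f : FunG) (s : GT) : FunG := finfun (fun t : GT => f (s * t)).

Lemma shift1 : shift^~ 1 =1 id.
Proof. by move=> f; apply/ffunP=> t; rewrite ffunE mul1g. Qed.

Lemma shiftM : forall f, act_morph shift f.
Proof. by move=> f a b; apply/ffunP=> t; rewrite !ffunE mulgA. Qed.

Definition shift_action := TotalAction shift1 shiftM.

Lemma shift_is_groupAction :
  is_groupAction [set: FunG] (shift_action : action [set: GT] FunG).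
Proof.
move=> s _; rewrite inE; apply/andP; split.
  by apply/subsetP=> x; rewrite inE.
apply/morphicP=> f g _ _; rewrite !actpermE /=.
by apply/ffunP=> t; rewrite !ffunE.
Qed.

Definition shift_gaction := GroupAction shift_is_groupAction.

(* The ambient group A^G ⋊ G; its element (s, f) stands for s * f. *)
Definition SD : finGroupType := sdprod_by shift_gaction.

Variable to : {action gT1 &-> aT}.

Definition Ind : {set FunG} :=
  [set f : FunG | [forall s : GT, forall t : gT1, f (s * pairg1 gT2 t) == to (f s) t]].

(* The copy of Ind inside SD, the copy of G, and the twisted wreath
   product  A wr_{G1} G = Ind ⋊ G  as a subgroup of SD. *)
Definition IndS : {set SD} := sdpair1 shift_gaction @* Ind.
Definition GS : {set SD} := sdpair2 shift_gaction @* [set: GT].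
Definition Wr : {set SD} := IndS <*> GS.

Definition piInd (f : FunG) : aT := f 1.

End TwistedWreath.

From HB Require Import structures.
From mathcomp Require Import all_boot all_fingroup.
Set Implicit Arguments.
Unset Strict Implicit.
Unset Printing Implicit Defensive.
Import GroupScope.
Local Open Scope group_scope.

(* Choose a surjection  c : G2 -> A  (possible as |G2| >= |A|)
   and let zeta be its inflation  zeta (x1, x2) = c(x2)^x1, which lies in
   Ind because G1 only acts on the first coordinate.  For h = (1, h2),
   which commutes with (g1, 1), the commutator  tau^h * tau^-1  lies in
   the normal closure N of tau and equals the element  zeta^h * zeta^-1
   of I; this element is again an inflation, of  x2 |-> c(h2 x2) c(x2)^-1,
   so its projection is  c(h2) c(1)^-1.  Surjectivity of c makes this
   any prescribed  a  in A. *)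

Lemma conj_commutator_in_closure (gT : finGroupType) (W : {group gT})
    (tau x : gT) :
  x \in W -> tau ^ x * tau^-1 \in <<tau ^: W>>.
Proof.
move=> Wx; rewrite groupM ?groupV ?mem_gen //; first exact: memJ_class.
exact: class_refl.
Qed.

Section SemidirectCommutator.
Variables (aT rT : finGroupType) (D : {group aT}) (R : {group rT}).
Variable to : groupAction D R.

(* In the external semidirect product  R ⋊ D, conjugating  u * g  by an
   element h of D commuting with g gives  u^h * g, so the commutator with
   u * g is the element  u^h * u^-1  of R. *)
Lemma sdpair_commutator (u : rT) (g h : aT) :
    u \in R -> g \in D -> h \in D -> commute g h ->
  let tau := sdpair1 to u * sdpair2 to g in
  tau ^ sdpair2 to h * tau^-1 = sdpair1 to (to u h * u^-1).
Proof.
move=> Ru Dg Dh cgh tau; rewrite /tau conjMg -sdpair_act // -morphJ //.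
rewrite /conjg cgh mulKg invMg mulgA mulgK -morphV // -morphM //;
  by rewrite ?groupV ?gact_stable.
Qed.

End SemidirectCommutator.

Lemma surjection_of_card (S T : finType) (t0 : T) :
  #|T| <= #|S| -> exists c : S -> T, forall t, exists s, c s = t.
Proof.
move=> leTS; exists (fun s => nth t0 (enum T) (enum_rank s)) => t.
have lt_t : index t (enum T) < #|S|.
  by apply: leq_trans leTS; rewrite cardE index_mem mem_enum.
by exists (enum_val (Ordinal lt_t)); rewrite enum_valK nth_index ?mem_enum.
Qed.

Section Inflation.
Variables (gT1 gT2 aT : finGroupType) (to : {action gT1 &-> aT}).
Hypothesis to_aut : forall g : gT1, {morph to^~ g : x y / x * y}.

Definition infl (d : gT2 -> aT) : FunG gT1 gT2 aT :=
  [ffun x : (gT1 * gT2)%type => to (d x.2) x.1].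

Lemma infl_Ind d : infl d \in @Ind gT1 gT2 aT to.
Proof.
rewrite inE; apply/forallP => -[x1 x2]; apply/forallP => t.
by rewrite !ffunE /= mulg1 actM.
Qed.

Lemma pi_infl d : piInd (infl d) = d 1.
Proof. by rewrite /piInd ffunE act1. Qed.

Lemma to_invg a t : to a^-1 t = (to a t)^-1.
Proof.
have to1 : to 1 t = 1 by apply: (mulgI (to 1 t)); rewrite -to_aut !mulg1.
by apply/eqP; rewrite eq_sym eq_invg_mul -to_aut mulgV to1.
Qed.

Lemma infl_shift_quotient d (h2 : gT2) :
  shift (infl d) (1, h2) * (infl d)^-1 =
  infl (fun x2 => d (h2 * x2) * (d x2)^-1).
Proof.
apply/ffunP => -[x1 x2].
by rewrite !ffunE /= mul1g to_aut to_invg.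
Qed.

End Inflation.

Theorem lemma4p1 (gT1 gT2 aT : finGroupType) (to : {action gT1 &-> aT})
  (to_aut : forall g : gT1, {morph to^~ g : x y / x * y})
  (hcard : #|aT| <= #|gT2|) :
  exists2 zeta : FunG gT1 gT2 aT, zeta \in @Ind gT1 gT2 aT to &
    forall g1 : gT1,
      let tau : SD gT1 gT2 aT :=
        sdpair1 (shift_gaction gT1 gT2 aT) zeta *
        sdpair2 (shift_gaction gT1 gT2 aT) (g1, 1) in
      let N := <<tau ^: @Wr gT1 gT2 aT to>> in
      @piInd gT1 gT2 aT @: (sdpair1 (shift_gaction gT1 gT2 aT) @*^-1 (N :&: @IndS gT1 gT2 aT to)) = [set: aT].
Proof.
have [c c_onto] := surjection_of_card 1 hcard.
exists (infl to c); first exact: infl_Ind.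
move=> g1 tau N; apply/setP => a; rewrite inE.
have [h2 c_h2] := c_onto (a * c 1).
set d := fun x2 => c (h2 * x2) * (c x2)^-1.
have commute_g1_h2 : commute ((g1, 1) : gT1 * gT2) (1, h2).
  by apply/eqP; rewrite xpair_eqE /= !mulg1 !mul1g !eqxx.
have tau_comm := sdpair_commutator (shift_gaction gT1 gT2 aT) (in_setT (infl to c))
                   (in_setT _) (in_setT _) commute_g1_h2.
rewrite /= infl_shift_quotient // -/d in tau_comm.
apply/imsetP; exists (infl to d); last by rewrite pi_infl /d mulg1 c_h2 mulgK.
rewrite mem_morphpre ?inE //; apply/andP; split.
  change (sdpair1 (shift_gaction gT1 gT2 aT) (infl to d) \in N).
  rewrite -tau_comm conj_commutator_in_closure //.
  by apply: (subsetP (joing_subr _ _)); apply: mem_morphim; rewrite ?inE.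
by apply: mem_morphim; [rewrite inE | exact: infl_Ind].
Qed.
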